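(* Let $n\ge 5$ and let $\sigma$ be a maximal simplex of $\Delta_n$ that covers all places. If there exists $w\in\sigma$ with $N(w)\cap\sigma=\{v\}$, then $\sigma=N(v)\cup K_v^{i_0,j_0,k_0}$ for some distinct $i_0,j_0,k_0\in[n]$.
   Context: $\mathbb{I}_n$ is the $n$-dimensional hypercube graph on vertex set $\{0,1\}^n$ (adjacent iff differing in exactly one coordinate), with Hamming distance $d(v,w)=\#\{i: v(i)\ne w(i)\}$, $v(i)$ the $i$-th coordinate. $\Delta_n=\mathcal{VR}(\mathbb{I}_n;3)$ is the simplicial complex whose simplices are the subsets $\sigma\subseteq\{0,1\}^n$ with $d(x,y)\le 3$ for all $x,y\in\sigma$. A simplex $\sigma$ covers all places if for each $i\in[n]=\{1,\dots,n\}$ there are $v,w\in\sigma$ with $v(i)=1$ and $w(i)=0$. For a vertex $v$ and distinct $i_1,\dots,i_k$, $v^{i_1,\dots,i_k}$ is $v$ with exactly coordinates $i_1,\dots,i_k$ changed. $N(v)=\{v^i: i\in[n]\}$. For distinct $i,j,k$, $K_v^{i,j,k}=\{v,v^{i,j},v^{j,k},v^{i,k}\}$. *)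

From mathcomp Require Import all_boot.
Set Implicit Arguments. Unset Strict Implicit. Unset Printing Implicit Defensive.

Definition vert (n : nat) := {ffun 'I_n -> bool}.

Definition hdist n (v w : vert n) : nat := #|[set i | v i != w i]|.

(* Simplex of Delta_n = VR(I_n;3): nonempty finite vertex set, pairwise distance <= 3 *)
Definition is_simplex n (s : {set vert n}) : Prop :=
  s != set0 /\ forall x y, x \in s -> y \in s -> hdist x y <= 3.

Definition is_maximal_simplex n (s : {set vert n}) : Prop :=
  is_simplex s /\ forall t : {set vert n}, is_simplex t -> s \subset t -> t = s.

Definition covers_all_places n (s : {set vert n}) : Prop :=
  forall i : 'I_n, exists v w, [/\ v \in s, w \in s, v i = true & w i = false].

(* v with the coordinates in I changed: v^{i1,...,ik} for I = {i1,...,ik} *)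
Definition flip n (v : vert n) (I : {set 'I_n}) : vert n :=
  [ffun j => if j \in I then ~~ v j else v j].

Definition nbhd n (v : vert n) : {set vert n} := [set flip v [set i] | i : 'I_n].

Definition Kset n (v : vert n) (i j k : 'I_n) : {set vert n} :=
  [set v; flip v [set i; j]; flip v [set j; k]; flip v [set i; k]].

(* Describe each vertex x by the set flips v x of places where it differs
   from v, so that w = v^a.  As s has diameter 3 and v is the only vertex of s
   adjacent to w, every x in s with at least two flips has exactly two flips
   besides a, and any two of these pairs meet.  They have no common point c,
   since maximality would otherwise put v^{a,c}, another neighbour of w, into
   s; pairwise intersecting pairs without a common point form a triangle
   {i0,j0}, {j0,k0}, {i0,k0}.  If some vertex of s also flipped a, all of s
   would only flip places among a, i0, j0, k0, contradicting that s covers all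
   n >= 5 places.  So s lies within distance 2 of v, maximality puts N(v) into
   s, and s = N(v) u K_v^{i0,j0,k0}. *)

From mathcomp Require Import all_boot zify.
Set Implicit Arguments. Unset Strict Implicit. Unset Printing Implicit Defensive.

(* Rewriting leaves convertible but syntactically distinct copies of the same
   cardinality, which lia would treat as unrelated atoms; generalizing first
   identifies them. *)
Ltac card_lia :=
  repeat match goal with
  | |- context [#|?A|] => move: #|A|
  | |- context [hdist ?x ?y] => move: (hdist x y)
  | |- context [nat_of_bool ?b] => have := leq_b1 b; move: (nat_of_bool b)
  end; lia.

Lemma cardsI1 (T : finType) (A : {set T}) a : #|A :&: [set a]| = (a \in A).
Proof.
have [aA | aNA] := boolP (a \in A).
  have /setIidPr -> : [set a] \subset A by rewrite sub1set.
  by rewrite cards1.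
apply/eqP; rewrite cards_eq0; apply/eqP/setP=> i; rewrite !inE.
by rewrite andbC; case: eqP => // ->; apply: negbTE.
Qed.

Section Flips.
Variable n : nat.
Implicit Types (v x y : vert n) (I : {set 'I_n}).

Definition flips v x : {set 'I_n} := [set i | x i != v i].

Lemma flipsK v x : flip v (flips v x) = x.
Proof. by apply/ffunP=> i; rewrite ffunE inE; case: (x i); case: (v i). Qed.

Lemma flips_flip v I : flips v (flip v I) = I.
Proof. by apply/setP=> i; rewrite !inE ffunE; case: (i \in I); case: (v i). Qed.

Lemma flip_inj v : injective (flip v).
Proof. exact: can_inj (flips_flip v). Qed.

Lemma flip0 v : flip v set0 = v.
Proof. by apply/ffunP=> i; rewrite ffunE inE. Qed.

Lemma flipsxx v : flips v v = set0.
Proof. by apply/setP=> i; rewrite !inE eqxx. Qed.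

Lemma hdist_sym x y : hdist x y = hdist y x.
Proof. by apply: eq_card => i; rewrite !inE eq_sym. Qed.

Lemma hdistxx x : hdist x x = 0.
Proof. by apply/eqP; rewrite cards_eq0; apply/eqP/setP=> i; rewrite !inE eqxx. Qed.

Lemma hdist_flips v x y :
  hdist x y + 2 * #|flips v x :&: flips v y| = #|flips v x| + #|flips v y|.
Proof.
rewrite /hdist.
have -> : [set i | x i != y i] = (flips v x :|: flips v y) :\: (flips v x :&: flips v y).
  by apply/setP=> i; rewrite !inE; case: (x i); case: (y i); case: (v i).
have := cardsUI (flips v x) (flips v y).
have := subset_leq_card (subsetIl (flips v x) (flips v y)).
have := subset_leq_card (subsetIr (flips v x) (flips v y)).
rewrite cardsD (setIidPr (subset_trans (subsetIl _ _) (subsetUl _ _))).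
card_lia.
Qed.

Lemma mem_nbhd v x : (x \in nbhd v) = (#|flips v x| == 1).
Proof.
apply/imsetP/cards1P => [[i _ ->]|[i hi]]; first by exists i; rewrite flips_flip.
by exists i => //; rewrite -hi flipsK.
Qed.

Lemma hdist1_nbhd x y : hdist x y = 1 -> x \in nbhd y.
Proof. by rewrite mem_nbhd => /eqP. Qed.

Lemma flipK v I : flip (flip v I) I = v.
Proof. by apply/ffunP=> i; rewrite !ffunE; case: (i \in I); rewrite ?negbK. Qed.

Lemma mem_Kset v x i j k :
  (x \in Kset v i j k) =
  (flips v x == set0) || (flips v x \in [set [set i; j]; [set j; k]; [set i; k]]).
Proof.
by rewrite !inE -!(inj_eq (@flip_inj v)) flipsK flip0 !orbA.
Qed.
End Flips.

Section Simplices.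
Variables (n : nat) (s : {set vert n}).

Lemma maximal_simplex_hdist : is_maximal_simplex s ->
  forall x y, x \in s -> y \in s -> hdist x y <= 3.
Proof. by case=> [[]]. Qed.

Lemma maximal_simplex_ext y : is_maximal_simplex s ->
  (forall x, x \in s -> hdist x y <= 3) -> y \in s.
Proof.
move=> [[s_neq0 s_dist] s_max] y_near.
suff <- : y |: s = s by rewrite setU11.
apply: s_max (subsetUr _ _); split; first by apply/set0Pn; exists y; rewrite setU11.
move=> x z /setU1P[->|xs] /setU1P[->|zs]; rewrite ?hdistxx //.
- by rewrite hdist_sym y_near.
- exact: y_near.
- exact: s_dist.
Qed.

Lemma covers_flipsT v (U : {set 'I_n}) : covers_all_places s ->
  (forall y, y \in s -> flips v y \subset U) -> U = [set: 'I_n].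
Proof.
move=> s_cov s_sub; apply/setP=> i; rewrite inE.
have [y [z [ys zs yi zi]]] := s_cov i.
apply: (subsetP (s_sub (if v i then z else y) _)); first by case: (v i).
by rewrite inE; case: (v i); rewrite ?yi ?zi.
Qed.

End Simplices.

Section IntersectingPairs.
Variable T : finType.
Implicit Types (A B : {set T}) (F : {set {set T}}).

Lemma card2_set1U A y : #|A| = 2 -> y \in A -> exists2 z, y != z & A = [set y; z].
Proof.
move=> /eqP/cards2P[p [q [pq ->]]] /set2P[->|->]; first by exists q.
by exists p; rewrite 1?eq_sym // setUC.
Qed.

Lemma meet_set2 A y z : [set y; z] :&: A != set0 -> (y \in A) || (z \in A).
Proof. by case/set0Pn=> u /setIP[/set2P[]-> uA]; rewrite uA ?orbT. Qed.

Lemma triangle_pair (p q r y z : T) : p != q -> q != r -> p != r -> y != z ->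
  [set y; z] :&: [set p; q] != set0 -> [set y; z] :&: [set q; r] != set0 ->
  [set y; z] :&: [set p; r] != set0 ->
  [set y; z] \in [set [set p; q]; [set q; r]; [set p; r]].
Proof.
move=> pq qr pr yz /meet_set2 + /meet_set2 + /meet_set2; rewrite !inE.
case/orP=> [/orP[]|/orP[]] /eqP ? ; subst;
case/orP=> [/orP[]|/orP[]] /eqP ? ; subst;
case/orP=> [/orP[]|/orP[]] /eqP ? ; subst;
first [ by rewrite eqxx in pq | by rewrite eqxx in qr | by rewrite eqxx in pr
      | by rewrite eqxx in yz | by rewrite eqxx ?orbT | by rewrite setUC eqxx ?orbT ].
Qed.

Lemma intersecting_pairs_triangle F :
  F != set0 ->
  {in F, forall A, #|A| = 2} ->
  {in F &, forall A B, A :&: B != set0} ->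
  (forall c, exists2 A, A \in F & c \notin A) ->
  exists p q r, [/\ p != q, q != r, p != r &
    F = [set [set p; q]; [set q; r]; [set p; r]]].
Proof.
move=> /set0Pn[A1 A1F] F2 Fmeet Fnot.
have /eqP/cards2P[p [q [pq A1E]]] := F2 _ A1F; subst A1.
have [A2 A2F pA2] := Fnot p.
have qA2 : q \in A2 by move: (meet_set2 (Fmeet _ _ A1F A2F)); rewrite (negbTE pA2).
have [r qr A2E] := card2_set1U (F2 _ A2F) qA2; subst A2.
have pr : p != r by apply: contraNneq pA2 => ->; rewrite set22.
have [A3 A3F qA3] := Fnot q.
have pA3 : p \in A3 by move: (meet_set2 (Fmeet _ _ A1F A3F)); rewrite (negbTE qA3) orbF.
have rA3 : r \in A3 by move: (meet_set2 (Fmeet _ _ A2F A3F)); rewrite (negbTE qA3).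
have A3E : A3 = [set p; r].
  by apply/eqP; rewrite eq_sym eqEcard subUset !sub1set pA3 rA3 F2 // cards2 pr.
subst A3; exists p, q, r; split=> //; apply/eqP; rewrite eqEsubset; apply/andP; split.
  apply/subsetP=> A AF; have /eqP/cards2P[y [z [yz AE]]] := F2 _ AF; subst A.
  by apply: triangle_pair => //; apply: Fmeet.
by apply/subsetP=> A /setUP[/setUP[]|] /set1P->.
Qed.

End IntersectingPairs.

Section MaximalSimplex.
Variables (n : nat) (s : {set vert n}) (v : vert n) (a : 'I_n).
Hypotheses (s_max : is_maximal_simplex s) (v_in_s : v \in s).
Hypothesis va_in_s : flip v [set a] \in s.
Hypothesis near_va : forall x, x \in s -> hdist x (flip v [set a]) = 1 -> x = v.

Let s_hdist := maximal_simplex_hdist s_max.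

Lemma card_flips_le3 x : x \in s -> #|flips v x| <= 3.
Proof. by move=> xs; apply: s_hdist. Qed.

Lemma hdist_flip1 x b : hdist x (flip v [set b]) + 2 * (b \in flips v x) = #|flips v x| + 1.
Proof. by have := hdist_flips v x (flip v [set b]); rewrite flips_flip cardsI1 cards1. Qed.

Lemma card_flips_le_a x : x \in s -> #|flips v x| <= 2 + 2 * (a \in flips v x).
Proof. by move=> xs; have := hdist_flip1 x a; have := s_hdist xs va_in_s; card_lia. Qed.

Lemma card3_big_flips_a x :
  x \in s -> 1 < #|flips v x| -> a \in flips v x -> #|flips v x| = 3.
Proof.
move=> xs x_big ax; suff : #|flips v x| != 2.
  by move: x_big (card_flips_le3 xs); card_lia.
apply/eqP=> x2; suff xv : x = v by move: x2; rewrite xv flipsxx cards0.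
by apply: near_va => //; have := hdist_flip1 x a; rewrite ax x2 /=; card_lia.
Qed.

Lemma card2_big_flipsD1 x : x \in s -> 1 < #|flips v x| -> #|flips v x :\ a| = 2.
Proof.
move=> xs x_big; have := cardsD1 a (flips v x); have := card_flips_le_a xs.
case: (boolP (a \in flips v x)) => [ax|_] /=; last by move: x_big; card_lia.
by rewrite card3_big_flips_a //; card_lia.
Qed.

Definition big_pairs := [set flips v x :\ a | x in s & 1 < #|flips v x|].

Lemma big_pairs_card2 : {in big_pairs, forall A : {set 'I_n}, #|A| = 2}.
Proof. by move=> _ /imsetP[x /setIdP[xs x_big] ->]; apply: card2_big_flipsD1. Qed.

Lemma big_pairs_meet : {in big_pairs &, forall A B : {set 'I_n}, A :&: B != set0}.
Proof.
move=> _ _ /imsetP[x /setIdP[xs x_big] ->] /imsetP[y /setIdP[ys y_big] ->].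
rewrite -setDIl -card_gt0.
have := cardsD1 a (flips v x :&: flips v y); rewrite inE.
have := hdist_flips v x y; have := s_hdist xs ys.
have := cardsD1 a (flips v x); rewrite card2_big_flipsD1 //.
have := cardsD1 a (flips v y); rewrite card2_big_flipsD1 //.
case: (a \in flips v x); case: (a \in flips v y) => /=; card_lia.
Qed.

Lemma big_pairs_avoid c : c != a -> exists2 A, A \in big_pairs & c \notin A.
Proof.
(* Otherwise maximality would add v^{a,c} to s, a second neighbour of w. *)
move=> ca; apply/exists_inP; rewrite -negb_forall_in; apply/negP=> /forall_inP c_common.
pose y := flip v [set a; c].
have ac2 : #|[set a; c]| = 2 by rewrite cards2 eq_sym ca.
have ys : y \in s.
  apply: maximal_simplex_ext => // x xs; have := hdist_flips v x y.
  rewrite flips_flip ac2; have := card_flips_le3 xs.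
  case: (ltnP 1 #|flips v x|) => [x_big|]; last by card_lia.
  have cx : c \in flips v x :&: [set a; c].
    have /c_common : flips v x :\ a \in big_pairs by apply: imset_f; rewrite inE xs.
    by rewrite !inE eqxx orbT => /andP[_ ->].
  have : 0 < #|flips v x :&: [set a; c]| by rewrite card_gt0; apply/set0Pn; exists c.
  card_lia.
have /near_va yv : hdist y (flip v [set a]) = 1.
  have := hdist_flips v y (flip v [set a]); rewrite !flips_flip ac2 cards1.
  have -> : [set a; c] :&: [set a] = [set a] by apply/setIidPr; rewrite sub1set set21.
  by rewrite cards1; card_lia.
by have := set21 a c; rewrite -(flips_flip v [set a; c]) -/y (yv ys) flipsxx inE.
Qed.

Hypotheses (n_ge5 : 5 <= n) (s_cov : covers_all_places s).

Lemma big_pairs_triangle : exists p q r, [/\ p != q, q != r, p != r &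
  big_pairs = [set [set p; q]; [set q; r]; [set p; r]]].
Proof.
have [c0 c0a] : exists c0 : 'I_n, c0 != a.
  have : 0 < #|[set~ a]| by rewrite cardsC1 card_ord; lia.
  by case/card_gt0P=> c; rewrite !inE; exists c.
have [A0 A0_pair _] := big_pairs_avoid c0a.
apply: intersecting_pairs_triangle.
- by apply/set0Pn; exists A0.
- exact: big_pairs_card2.
- exact: big_pairs_meet.
move=> c; have [->|ca] := eqVneq c a; last exact: big_pairs_avoid.
by exists A0 => //; case/imsetP: A0_pair => x _ ->; rewrite setD11.
Qed.

Lemma small_flips_sub x y : x \in s -> y \in s ->
  #|flips v x| = 3 -> #|flips v y| <= 1 -> flips v y \subset flips v x.
Proof.
move=> xs ys x3 y_small; apply/setIidPl/eqP; rewrite eqEcard subsetIl /=.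
by move: y_small; have := hdist_flips v y x; have := s_hdist ys xs; rewrite x3; card_lia.
Qed.

Lemma big_flips_notin_a x : x \in s -> 1 < #|flips v x| -> a \notin flips v x.
Proof.
(* Otherwise every vertex of s flips only places among a, p, q, r. *)
move=> xs x_big; apply/negP=> ax.
have [p [q [r [_ _ _ pairsE]]]] := big_pairs_triangle.
pose U := a |: [set p; q; r].
have big_sub y : y \in s -> 1 < #|flips v y| -> flips v y \subset U.
  move=> ys y_big; rewrite /U -subDset.
  have : flips v y :\ a \in big_pairs by apply: imset_f; rewrite inE ys.
  by rewrite pairsE !inE => /orP[/orP[]|]/eqP->; rewrite subUset !sub1set !inE !eqxx ?orbT.
have UT : U = [set: 'I_n].
  apply: covers_flipsT s_cov _ => y ys; have [y_big|y_small] := ltnP 1 #|flips v y|.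
    exact: big_sub.
  apply: subset_trans (big_sub x xs x_big).
  exact: small_flips_sub (card3_big_flips_a xs x_big ax) y_small.
have : #|U| <= 4 by rewrite /U cardsU1 cardsU cards2 cards1; card_lia.
by rewrite UT cardsT card_ord; lia.
Qed.

Lemma card_flips_le2 x : x \in s -> #|flips v x| <= 2.
Proof.
move=> xs; have [x_big|] := ltnP 1 #|flips v x|; last by card_lia.
by have := card_flips_le_a xs; rewrite (negbTE (big_flips_notin_a xs x_big)).
Qed.

Lemma nbhd_subset : nbhd v \subset s.
Proof.
apply/subsetP=> _ /imsetP[b _ ->]; apply: maximal_simplex_ext => // x xs.
by have := hdist_flip1 x b; have := card_flips_le2 xs; card_lia.
Qed.

Lemma big_flipsD1_id x : x \in s -> 1 < #|flips v x| -> flips v x :\ a = flips v x.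
Proof.
move=> xs x_big; apply/eqP; rewrite eqEsubset subD1set subsetD1 subxx.
exact: big_flips_notin_a.
Qed.

Lemma mem_big_pairs x : x \in s -> 1 < #|flips v x| -> flips v x \in big_pairs.
Proof. by move=> xs x_big; rewrite -big_flipsD1_id //; apply: imset_f; rewrite inE xs. Qed.

Lemma flip_big_pairs A : A \in big_pairs -> flip v A \in s.
Proof. by case/imsetP=> x /setIdP[xs x_big] ->; rewrite big_flipsD1_id // flipsK. Qed.

Theorem maximal_simplex_shape : exists p q r, [/\ p != q, q != r, p != r &
  s = nbhd v :|: Kset v p q r].
Proof.
have [p [q [r [pq qr pr pairsE]]]] := big_pairs_triangle.
exists p, q, r; split=> //; apply/setP=> x.
rewrite inE mem_Kset -pairsE; apply/idP/idP.
  move=> xs; rewrite mem_nbhd -cards_eq0.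
  have [x_big|] := ltnP 1 #|flips v x|; first by rewrite mem_big_pairs ?orbT.
  by rewrite leq_eqVlt ltnS leqn0 => /orP[]->; rewrite ?orbT.
case/or3P=> [/(subsetP nbhd_subset) // | /eqP x0 | /flip_big_pairs].
  by rewrite -(flipsK v x) x0 flip0.
by rewrite flipsK.
Qed.

End MaximalSimplex.

Theorem mainTheorem8 (n : nat) (hn : 5 <= n) (s : {set vert n})
  (hmax : is_maximal_simplex s) (hcov : covers_all_places s)
  (w v : vert n) (hw : w \in s) (hN : nbhd w :&: s = [set v]) :
  exists i0 j0 k0 : 'I_n, [/\ i0 != j0, j0 != k0, i0 != k0 &
    s = nbhd v :|: Kset v i0 j0 k0].
Proof.
have /setIP[/imsetP[a _ v_def] vs] : v \in nbhd w :&: s by rewrite hN set11.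
have w_def : w = flip v [set a] by rewrite v_def flipK.
subst w; apply: (maximal_simplex_shape (a := a)) => // x xs /hdist1_nbhd xw.
by apply/set1P; rewrite -hN inE xw.
Qed.
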